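(* In the FHMA network described below, if the intensity $\lambda$ satisfies $$\lambda<\frac{\ln\frac{3}{2}-\frac{1}{6}\theta r_0^\alpha WN_0}{c_dr_0^d\theta^\delta C(\delta)\left(2^{-\delta}-2^{\delta-1}3^{-\delta}\right)},$$ then the integer number of sub-bands $N_{\mathrm{opt}}\ge 1$ that minimizes the mean local delay $D(N)$ equals $2$.
   Context: Model: transmitters form a homogeneous Poisson point process $\Phi$ of intensity $\lambda>0$ in $\mathbb{R}^d$; the typical receiver is at the origin and its desired transmitter $x_0\in\Phi$ is at distance $r_0>0$; probabilities are under the Palm distribution at $x_0$. Time is slotted. Path loss $\kappa r^{-\alpha}$ with $\alpha>d$, $\delta=d/\alpha\in(0,1)$. Power fading coefficients are i.i.d. exponential with mean $1$ over transmitters and slots, independent of everything. Unit power, always backlogged transmitters. Bandwidth $W$, noise power spectral density $N_r$, $N_0=N_r/\kappa$, SINR threshold $\theta>0$. $c_d$ is the volume of the unit ball in $\mathbb{R}^d$, $C(\delta)=\Gamma(1+\delta)\Gamma(1-\delta)=\frac{\pi\delta}{\sin(\pi\delta)}$. FHMA with $N$ sub-bands: each transmitter $x$ independently picks a sub-band $\mathcal{S}_k(x)$ uniformly from $\{1,\dots,N\}$ in each slot $k$; $\mathrm{SINR}_k=\frac{h_{k,x_0}r_0^{-\alpha}}{WN_0/N+\sum_{x\in\Phi\setminus\{x_0\}}h_{k,x}|x|^{-\alpha}\mathbf{1}(\mathcal{S}_k(x)=\mathcal{S}_k(x_0))}$; a slot is successful if $\mathrm{SINR}_k>\theta$; the local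 delay is the number of slots until the $N$-th successful slot and $D(N)$ is its mean. (The mean equals $D(N)=N\exp\left(\frac{\lambda c_d r_0^d\theta^{\delta}C(\delta)}{(N-1)^{1-\delta}N^{\delta}}+\frac{\theta r_0^\alpha WN_0}{N}\right)$, with $D(1)=\infty$.) *)

From Stdlib Require Import Reals Lra.
From Coquelicot Require Import Coquelicot.
Open Scope R_scope.

(* Volume of the unit ball in R^d:  c_0 = 1, c_1 = 2, c_d = (2 pi / d) c_(d-2),
   i.e. c_d = pi^(d/2) / Gamma(d/2 + 1). *)
Fixpoint unit_ball_vol (d : nat) : R :=
  match d with
  | O => 1
  | S O => 2
  | S (S k as d1) => 2 * PI / INR (S d1) * unit_ball_vol k
  end.

(* C(delta) = Gamma(1+delta) Gamma(1-delta) = pi delta / sin(pi delta). *)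
Definition Cdelta (delta : R) : R := PI * delta / sin (PI * delta).

(* Parameters: d dimension, alpha path-loss exponent, lambda intensity,
   r0 link distance, theta SINR threshold, W bandwidth, N0 = N_r / kappa. *)
Definition mean_local_delay (d : nat) (alpha lambda r0 theta W N0 : R)
    (N : nat) : Rbar :=
  let delta := INR d / alpha in
  if (N <=? 1)%nat then p_infty
  else Finite
    (INR N * exp (lambda * unit_ball_vol d * Rpower r0 (INR d)
                    * Rpower theta delta * Cdelta delta
                    / (Rpower (INR N - 1) (1 - delta) * Rpower (INR N) delta)
                  + theta * Rpower r0 alpha * W * N0 / INR N)).

(** Writing [D(N) = exp (F N)] with
    [F x = ln x + A / ((x - 1)^(1-δ) x^δ) + T / x], [A = λ c_d r0^d θ^δ C(δ)],
    [T = θ r0^α W N0], the hypothesis on [λ] is exactly [F 2 < F 3].  For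
    [N >= 4] one bounds [(x - 1)^(1-δ) x^δ <= x] and compares [F N - F 2]
    with a positive multiple [c_N] of [F 3 - F 2] ([c_N = (N + 1) / 3] for
    [N <= 6], [c_N = 3] beyond): each of the three terms of [F N - F 2]
    dominates [c_N] times the corresponding term for [N = 3].  With
    [w = 2^-δ] and [v = (4/3)^δ] that comparison is a polynomial inequality
    under the constraints [1 <= v <= 4/3] and [w v^2 = (8/9)^δ <= 1]. *)
From Stdlib Require Import Reals Lra Psatz.
From Coquelicot Require Import Coquelicot.
Open Scope R_scope.

Lemma unit_ball_vol_pos (d : nat) : 0 < unit_ball_vol d.
Proof.
  enough (H : 0 < unit_ball_vol d /\ 0 < unit_ball_vol (S d)) by apply H.
  induction d as [|d [IH1 IH2]]; [simpl; lra|].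
  split; [exact IH2|].
  change (unit_ball_vol (S (S d))) with (2 * PI / INR (S (S d)) * unit_ball_vol d).
  pose proof PI_RGT_0.
  apply Rmult_lt_0_compat; [apply Rdiv_lt_0_compat; [lra|apply lt_0_INR; lia]|exact IH1].
Qed.

Lemma Cdelta_pos (delta : R) : 0 < delta < 1 -> 0 < Cdelta delta.
Proof.
  intros Hdelta. pose proof PI_RGT_0.
  unfold Cdelta. apply Rdiv_lt_0_compat; [nra|apply sin_gt_0; nra].
Qed.

Lemma ln_le_of_pow_le (x y : R) (p q : nat) :
  0 < x -> 0 < y -> x ^ p <= y ^ q -> INR p * ln x <= INR q * ln y.
Proof.
  intros Hx Hy Hpq. rewrite <- !ln_pow by assumption.
  apply ln_le; [apply pow_lt|]; assumption.
Qed.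

Lemma Rpower_mixed_le (x s : R) : 1 < x -> 0 <= s <= 1 ->
  Rpower (x - 1) (1 - s) * Rpower x s <= x.
Proof.
  intros Hx Hs.
  rewrite <- (Rpower_1 x) at 3 by lra.
  replace 1 with ((1 - s) + s) at 3 by ring.
  rewrite Rpower_plus.
  apply Rmult_le_compat_r; [left; apply exp_pos|].
  apply Rle_Rpower_l; lra.
Qed.

(** The comparison constant [(x + 1) / 3]: with [y = x - 4] the bracket below
    equals [(2 - v) y^2 + (12 - 9 v) y + 2 (4 - 3 v) (2 - v)]. *)
Lemma gap_scaling (w v x : R) : 0 < w -> w * v ^ 2 <= 1 -> 1 <= v <= 4 / 3 -> 4 <= x ->
  w - / x <= (x + 1) / 3 * (w - w * v / 2).
Proof.
  intros Hw Hwv Hv Hx.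
  assert (Hpoly : x * (4 - 2 * x + (x + 1) * v) <= 6 * v ^ 2).
  { assert (0 <= (2 - v) * (x - 4) ^ 2) by (apply Rmult_le_pos; nra).
    assert (0 <= (x - 4) * (4 - 3 * v)) by (apply Rmult_le_pos; lra).
    assert (0 <= (4 - 3 * v) * (2 - v)) by (apply Rmult_le_pos; lra).
    nra. }
  apply (Rmult_le_reg_l (6 * x)); [lra|].
  replace (6 * x * (w - / x)) with (6 * x * w - 6) by (field; lra).
  assert (w * (x * (4 - 2 * x + (x + 1) * v)) <= w * (6 * v ^ 2))
    by (apply Rmult_le_compat_l; lra).
  nra.
Qed.

Lemma comparison_constant (w v : R) (N : nat) :
  0 < w -> w * v ^ 2 <= 1 -> 1 <= v <= 4 / 3 -> (4 <= N)%nat ->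
  exists c, 0 < c /\ w - / INR N <= c * (w - w * v / 2) /\
            / 2 - / INR N <= c / 6 /\ c * ln (3 / 2) <= ln (INR N / 2).
Proof.
  intros Hw Hwv Hv HN.
  assert (Hcases : (N = 4 \/ N = 5 \/ N = 6 \/ 7 <= N)%nat) by lia.
  destruct Hcases as [-> | [-> | [-> | H7]]].
  - replace (INR 4) with 4 by (simpl; lra).
    pose proof (ln_le_of_pow_le (3 / 2) 2 5 3 ltac:(lra) ltac:(lra) ltac:(simpl; lra)).
    exists ((4 + 1) / 3). simpl INR in *.
    repeat split; [lra|apply gap_scaling; lra|lra|].
    replace (4 / 2) with 2 by field. lra.
  - replace (INR 5) with 5 by (simpl; lra).
    pose proof (ln_le_of_pow_le (3 / 2) (5 / 2) 2 1 ltac:(lra) ltac:(lra) ltac:(simpl; lra)).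
    exists ((5 + 1) / 3). simpl INR in *.
    repeat split; [lra|apply gap_scaling; lra|lra|lra].
  - replace (INR 6) with 6 by (simpl; lra).
    pose proof (ln_le_of_pow_le (3 / 2) 3 7 3 ltac:(lra) ltac:(lra) ltac:(simpl; lra)).
    exists ((6 + 1) / 3). simpl INR in *.
    repeat split; [lra|apply gap_scaling; lra|lra|].
    replace (6 / 2) with 3 by field. lra.
  - apply (le_INR 7) in H7. simpl INR in H7.
    assert (0 < / INR N) by (apply Rinv_0_lt_compat; lra).
    pose proof (ln_le_of_pow_le (3 / 2) (INR N / 2) 3 1 ltac:(lra) ltac:(lra)
                  ltac:(simpl; lra)).
    exists 3. simpl INR in *.
    repeat split; [lra|nra|lra|lra].
Qed.

Lemma Rpower_Ropp_Rinv (x y : R) : 0 < x -> Rpower x (- y) = Rpower (/ x) y.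
Proof. intros Hx. unfold Rpower. rewrite ln_Rinv by exact Hx. f_equal; ring. Qed.

Lemma Rpower_pos (x y : R) : 0 < Rpower x y.
Proof. apply exp_pos. Qed.

Lemma Rpower_1_l (y : R) : Rpower 1 y = 1.
Proof. unfold Rpower. rewrite ln_1, Rmult_0_r. apply exp_0. Qed.

Lemma Rpower_2_pred_3_opp (delta : R) :
  Rpower 2 (delta - 1) * Rpower 3 (- delta) =
  Rpower 2 (- delta) * Rpower (4 / 3) delta / 2.
Proof.
  replace (delta - 1) with (delta + - (1)) by ring.
  rewrite Rpower_plus, Rpower_Ropp, Rpower_1 by lra.
  rewrite !Rpower_Ropp_Rinv by lra.
  unfold Rdiv.
  rewrite Rmult_comm, <- Rmult_assoc, (Rmult_comm (Rpower (/ 3) delta)).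
  rewrite !Rpower_mult_distr by lra.
  replace (2 * / 3) with (/ 2 * (4 / 3)) by field. reflexivity.
Qed.

Section Powers_of_delta.

Variable delta : R.
Hypothesis delta_range : 0 < delta < 1.

Lemma Rpower_4_3_bounds : 1 <= Rpower (4 / 3) delta <= 4 / 3.
Proof.
  split.
  - rewrite <- (Rpower_O (4 / 3)) at 1 by lra. apply Rle_Rpower; lra.
  - rewrite <- (Rpower_1 (4 / 3)) at 2 by lra. apply Rle_Rpower; lra.
Qed.

Lemma Rpower_2_opp_4_3_sqr_le1 : Rpower 2 (- delta) * Rpower (4 / 3) delta ^ 2 <= 1.
Proof.
  replace (Rpower (4 / 3) delta ^ 2) with (Rpower (4 / 3) delta * Rpower (4 / 3) delta)
    by ring.
  rewrite Rpower_Ropp_Rinv, <- Rmult_assoc, !Rpower_mult_distr by lra.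
  rewrite <- (Rpower_1_l delta).
  apply Rle_Rpower_l; lra.
Qed.

End Powers_of_delta.

Definition log_delay (A T delta x : R) : R :=
  ln x + A / (Rpower (x - 1) (1 - delta) * Rpower x delta) + T / x.

Section Log_delay.

Variables A T delta : R.
Hypotheses (A_ge0 : 0 <= A) (T_ge0 : 0 <= T) (delta_range : 0 < delta < 1).

Lemma log_delay_3_sub_2 :
  log_delay A T delta 3 - log_delay A T delta 2 =
  ln (3 / 2) - A * (Rpower 2 (- delta) - Rpower 2 (delta - 1) * Rpower 3 (- delta)) - T / 6.
Proof.
  unfold log_delay.
  replace (3 - 1) with 2 by ring. replace (2 - 1) with 1 by ring.
  rewrite Rpower_1_l, ln_div by lra.
  replace (delta - 1) with (- (1 - delta)) by ring.
  rewrite !Rpower_Ropp. field.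
  repeat split; apply Rgt_not_eq, exp_pos.
Qed.

Lemma log_delay_lower (x : R) : 2 <= x -> ln x + A / x + T / x <= log_delay A T delta x.
Proof.
  intros Hx. unfold log_delay.
  assert (HP : 0 < Rpower (x - 1) (1 - delta) * Rpower x delta)
    by (apply Rmult_lt_0_compat; apply exp_pos).
  enough (A / x <= A / (Rpower (x - 1) (1 - delta) * Rpower x delta)) by lra.
  apply Rmult_le_compat_l; [exact A_ge0|].
  apply Rinv_le_contravar; [exact HP|].
  apply Rpower_mixed_le; lra.
Qed.

Hypothesis log_delay_2_lt_3 : log_delay A T delta 2 < log_delay A T delta 3.

Lemma log_delay_2_lt (N : nat) : (3 <= N)%nat ->
  log_delay A T delta 2 < log_delay A T delta (INR N).
Proof.
  intros HN.
  destruct (Nat.eq_dec N 3) as [-> | HN3].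
  { replace (INR 3) with 3 by (simpl; lra). exact log_delay_2_lt_3. }
  set (w := Rpower 2 (- delta)). set (v := Rpower (4 / 3) delta).
  assert (Hgap3 : A * (w - w * v / 2) + T / 6 < ln (3 / 2)).
  { pose proof log_delay_3_sub_2 as H32.
    rewrite Rpower_2_pred_3_opp in H32. fold w v in H32. lra. }
  destruct (comparison_constant w v N) as (c & Hc & Hgap & HT & Hln).
  - apply Rpower_pos.
  - exact (Rpower_2_opp_4_3_sqr_le1 delta delta_range).
  - exact (Rpower_4_3_bounds delta delta_range).
  - lia.
  - assert (HxN : 4 <= INR N)
      by (replace 4 with (INR 4) by (simpl; lra); apply le_INR; lia).
    pose proof (log_delay_lower (INR N) ltac:(lra)) as Hlow.
    assert (Hw2 : log_delay A T delta 2 = ln 2 + A * w + T / 2).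
    { unfold log_delay.
      replace (2 - 1) with 1 by ring. rewrite Rpower_1_l, Rmult_1_l.
      unfold w. rewrite Rpower_Ropp. unfold Rdiv. ring. }
    rewrite (ln_div (INR N) 2) in Hln by lra.
    assert (A * (w - / INR N) <= A * (c * (w - w * v / 2)))
      by (apply Rmult_le_compat_l; assumption).
    assert (T * (/ 2 - / INR N) <= T * (c / 6)) by (apply Rmult_le_compat_l; assumption).
    assert (c * (A * (w - w * v / 2) + T / 6) < c * ln (3 / 2))
      by (apply Rmult_lt_compat_l; assumption).
    rewrite Hw2. unfold Rdiv in Hlow. lra.
Qed.

End Log_delay.

Lemma mean_local_delay_exp (d : nat) (alpha lambda r0 theta W N0 : R) (N : nat) :
  (2 <= N)%nat ->
  let delta := INR d / alpha in
  mean_local_delay d alpha lambda r0 theta W N0 N =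
  Finite (exp (log_delay
    (lambda * (unit_ball_vol d * Rpower r0 (INR d) * Rpower theta delta * Cdelta delta))
    (theta * Rpower r0 alpha * W * N0) delta (INR N))).
Proof.
  intros HN delta.
  assert (HxN : 0 < INR N) by (apply lt_0_INR; lia).
  unfold mean_local_delay.
  destruct (Nat.leb_spec N 1) as [HN1|_]; [lia|].
  f_equal. unfold log_delay.
  rewrite (Rplus_assoc (ln _)), (exp_plus (ln _)), exp_ln by exact HxN.
  do 2 f_equal. unfold delta, Rdiv. ring.
Qed.

Theorem corollary1 (d : nat) (alpha lambda r0 theta W N0 : R) :
  (1 <= d)%nat -> INR d < alpha ->
  0 < lambda -> 0 < r0 -> 0 < theta -> 0 < W -> 0 <= N0 ->
  let delta := INR d / alpha in
  lambda < (ln (3 / 2) - / 6 * theta * Rpower r0 alpha * W * N0)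
           / (unit_ball_vol d * Rpower r0 (INR d) * Rpower theta delta * Cdelta delta
              * (Rpower 2 (- delta) - Rpower 2 (delta - 1) * Rpower 3 (- delta))) ->
  forall N : nat, (1 <= N)%nat -> N <> 2%nat ->
    Rbar_lt (mean_local_delay d alpha lambda r0 theta W N0 2)
            (mean_local_delay d alpha lambda r0 theta W N0 N).
Proof.
  intros Hd Halpha Hlambda Hr0 Htheta HW HN0 delta Hlam N HN HN2.
  assert (Hdelta : 0 < delta < 1).
  { assert (1 <= INR d) by (apply (le_INR 1); exact Hd).
    unfold delta. split; [apply Rdiv_lt_0_compat|apply Rcomplements.Rlt_div_l]; lra. }
  set (K := unit_ball_vol d * Rpower r0 (INR d) * Rpower theta delta * Cdelta delta).
  set (T := theta * Rpower r0 alpha * W * N0).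
  set (g3 := Rpower 2 (- delta) - Rpower 2 (delta - 1) * Rpower 3 (- delta)).
  assert (HK : 0 < K).
  { unfold K.
    apply Rmult_lt_0_compat; [|exact (Cdelta_pos delta Hdelta)].
    apply Rmult_lt_0_compat; [|apply Rpower_pos].
    apply Rmult_lt_0_compat; [apply unit_ball_vol_pos|apply Rpower_pos]. }
  assert (HT : 0 <= T).
  { pose proof (Rpower_pos r0 alpha).
    unfold T. repeat apply Rmult_le_pos; lra. }
  assert (Hg3 : 0 < g3).
  { unfold g3. rewrite Rpower_2_pred_3_opp.
    pose proof (Rpower_4_3_bounds delta Hdelta). pose proof (Rpower_pos 2 (- delta)).
    nra. }
  assert (H23 : log_delay (lambda * K) T delta 2 < log_delay (lambda * K) T delta 3).
  { pose proof (log_delay_3_sub_2 (lambda * K) T delta) as H32. fold g3 in H32.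
    fold K g3 in Hlam. apply Rlt_div_r in Hlam; [|apply Rmult_lt_0_compat; assumption].
    replace (/ 6 * theta * Rpower r0 alpha * W * N0) with (T / 6) in Hlam
      by (unfold T; field).
    lra. }
  destruct N as [|[|[|n]]]; try lia.
  - unfold mean_local_delay at 2. simpl. exact I.
  - rewrite !mean_local_delay_exp by lia. fold delta K T.
    apply exp_increasing.
    replace (INR 2) with 2 by (simpl; lra).
    apply log_delay_2_lt; [nra|exact HT|exact Hdelta|exact H23|lia].
Qed.
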